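(* Let $D_G$ be a weighted oriented graph on vertex set $\{x_1,\ldots,x_n\}$ and $I=I(D_G)$. Construct the simple graph $G^D$ with vertex set $\{x_{1,1},\ldots,x_{n,1}\}\cup\{x_{k,2},\ldots,x_{k,w(k)} : x_k \text{ is not a sink and } w(k)\ne 1\}$ and edge set $E(G^D)=\bigcup_{(x_i,x_j)\in E(D_G)}\{\{x_{i,1},x_{j,1}\},\{x_{i,2},x_{j,1}\},\ldots,\{x_{i,w(i)},x_{j,1}\}\}$. Then $(I^{\vee}(\mathrm{pol}))^{\vee}=I(G^D)$.
   Context: A weighted oriented graph $D_G$ with underlying simple graph $G$ is an orientation of the edges with weights $w(k)=w(x_k)\in\mathbb{Z}_{>0}$; $(x_i,x_j)$ denotes an edge oriented from $x_i$ to $x_j$; a sink is a vertex all of whose edges point towards it; sources have weight $1$ by convention. $I(D_G)=\langle x_ix_j^{w(j)}:(x_i,x_j)\in E(D_G)\rangle\subseteq A=K[x_1,\ldots,x_n]$; for a simple graph $G'$, $I(G')$ is the usual squarefree edge ideal. Alexander dual (Miller): for $\mathbf b\in\mathbb N^n$ let $\mathbf m^{\mathbf b}=\langle x_i^{b_i}: b_i\ge1\rangle$; every monomial ideal $I$ is an irredundant intersection of such irreducible ideals, forming the set $\mathrm{Irr}(I)$. Let $\mathbf a_I$ be the exponent vector of the lcm of the minimal generators of $I$. For $\mathbf 0\preceq\mathbf b\preceq\mathbf a$, $\mathbf b^{\mathbf a}$ has $i$-th coordinate $a_i+1-b_i$ if $b_i\ge1$ and $0$ otherwise. Then $I^{\vee}=\langle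 \mathbf x^{\mathbf b^{\mathbf a_I}} : \mathbf m^{\mathbf b}\in\mathrm{Irr}(I)\rangle$; for squarefree ideals this is the usual Alexander dual. Polarization: $x_i^{a}(\mathrm{pol})=\prod_{j=1}^{a}x_{i,j}$, $\mathbf x^{\mathbf a}(\mathrm{pol})=\prod_i x_i^{a_i}(\mathrm{pol})$, and for a monomial ideal $I$ with minimal generators $\mathbf x^{\mathbf a_1},\ldots,\mathbf x^{\mathbf a_m}$, $I(\mathrm{pol})=\langle\mathbf x^{\mathbf a_1}(\mathrm{pol}),\ldots,\mathbf x^{\mathbf a_m}(\mathrm{pol})\rangle$ in $K[x_{i,j}:1\le i\le n,1\le j\le r_i]$, $r_i$ the exponent of $x_i$ in the lcm of the generators. *)

(* Monomial ideals are modelled combinatorially by finite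
   lists of generating monomials (exponent vectors). *)
From Stdlib Require Import ClassicalEpsilon.
From mathcomp Require Import all_boot.
Set Implicit Arguments. Unset Strict Implicit. Unset Printing Implicit Defensive.

Section Monomials.
Variable V : finType.

Definition mono := {ffun V -> nat}.

Definition dvdm (g m : mono) : bool := [forall v, g v <= m v].

Definition mideal := mono -> Prop.

Definition gen (gs : seq mono) : mideal := fun m => has (fun g => dvdm g m) gs.

Definition same_ideal (I J : mideal) : Prop := forall m, I m <-> J m.

Definition mingens (gs : seq mono) : seq mono :=
  [seq g <- gs | ~~ has (fun h => dvdm h g && (h != g)) gs].

Definition lcmm (gs : seq mono) : mono := [ffun v => \max_(g <- gs) g v].

Definition aI (gs : seq mono) : mono := lcmm (mingens gs).

(* membership in the irreducible ideal m^b = < x_i^{b_i} : b_i >= 1 > *)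
Definition mirr (b : mono) (m : mono) : bool := [exists v, (0 < b v) && (b v <= m v)].

Definition irr_inter (S : seq mono) : mideal := fun m => all (fun b => mirr b m) S.

Definition is_Irr (I : mideal) (S : seq mono) : Prop :=
  same_ideal I (irr_inter S) /\
  (forall b, b \in S -> ~ same_ideal I (irr_inter (rem b S))).

(* Irr(I) (chosen; it exists and is unique up to order) *)
Definition Irr (I : mideal) : seq mono :=
  epsilon (inhabits [::]) (is_Irr I).

Definition bdual (a b : mono) : mono :=
  [ffun v => if 0 < b v then a v + 1 - b v else 0].

(* Miller's Alexander dual, as a list of generators *)
Definition dual (gs : seq mono) : seq mono :=
  [seq bdual (aI gs) b | b <- Irr (gen gs)].

End Monomials.

(* Polarization: the variable x_{i,j} (1 <= j) is encoded as (i, j-1) in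
   'I_n * 'I_N, where N is an upper bound for all the r_i. *)
Definition polm (n N : nat) (m : mono 'I_n) : mono ('I_n * 'I_N)%type :=
  [ffun p : ('I_n * 'I_N)%type => nat_of_bool (p.2 < m p.1)].

Definition pol (n N : nat) (gs : seq (mono 'I_n)) : seq (mono ('I_n * 'I_N)%type) :=
  [seq polm N g | g <- mingens gs].

(* Weighted oriented graphs on {x_1..x_n}: arc i j means (x_i, x_j) is an edge *)
Definition is_source (n : nat) (arc : rel 'I_n) (i : 'I_n) : Prop :=
  (exists j, arc i j) /\ (forall j, ~~ arc j i).

Definition arcs (n : nat) (arc : rel 'I_n) : seq ('I_n * 'I_n)%type :=
  enum [pred p : ('I_n * 'I_n)%type | arc p.1 p.2].

Definition edge_mono (n : nat) (w : 'I_n -> nat) (i j : 'I_n) : mono 'I_n :=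
  [ffun v => ((v == i) : nat) + ((v == j) : nat) * w j].

Definition IDG (n : nat) (arc : rel 'I_n) (w : 'I_n -> nat) : seq (mono 'I_n) :=
  [seq edge_mono w p.1 p.2 | p <- arcs arc].

Definition gd_edge (n N : nat) (i j : 'I_n) (l : nat) : mono ('I_n * 'I_N)%type :=
  [ffun p : ('I_n * 'I_N)%type =>
     nat_of_bool (((p.1 == i) && (p.2 == l.-1 :> nat)) || ((p.1 == j) && (p.2 == 0 :> nat)))].

Definition IGD (n N : nat) (arc : rel 'I_n) (w : 'I_n -> nat) : seq (mono ('I_n * 'I_N)%type) :=
  flatten [seq [seq gd_edge N p.1 p.2 l | l <- iota 1 (w p.1)] | p <- arcs arc].

(* Alexander duality is complementation: m lies in J^∨ iff x^(a_J - m) does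
   not lie in J.  For J the polarization of I^∨, with I = I(D_G), this says
   that m lies in (I^∨(pol))^∨ iff, for every u in I^∨, the
   polarization of u shares a variable with m.  Because a_I agrees with w on
   every vertex lying on an edge, u lies in I^∨ iff every edge (x_i, x_j) has
   u_i >= w(i) or u_j >= 1.  If m is divisible by some x_{i,l} x_{j,1} with
   l <= w(i), it meets every such u; otherwise the u that is as large as
   possible outside the support of m (u_v = w(v), 1 or 0) lies in I^∨ and
   misses m. *)
From Stdlib Require Import ClassicalEpsilon Classical.
From mathcomp Require Import all_boot.
From mathcomp Require Import zify.
Set Implicit Arguments. Unset Strict Implicit. Unset Printing Implicit Defensive.

Section MonomialIdeals.
Variable V : finType.
Implicit Types (g h m b : mono V) (gs S : seq (mono V)).

Lemma dvdm_refl g : dvdm g g.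
Proof. by apply/forallP. Qed.

Lemma dvdm_trans h g m : dvdm g h -> dvdm h m -> dvdm g m.
Proof.
move=> /forallP gh /forallP hm; apply/forallP => v.
exact: leq_trans (gh v) (hm v).
Qed.

Lemma mirr_dvdm b g m : dvdm g m -> mirr b g -> mirr b m.
Proof.
move=> /forallP gm /existsP [v /andP [bv bg]]; apply/existsP; exists v.
by rewrite bv (leq_trans bg (gm v)).
Qed.

Lemma mingens_subset gs : {subset mingens gs <= gs}.
Proof. by move=> g; rewrite mem_filter => /andP []. Qed.

Definition deg g := \sum_v g v.

Lemma deg_dvdm_lt g h : dvdm h g -> h != g -> deg h < deg g.
Proof.
move=> /forallP hg hg_neq.
have [v hv_lt] : exists v, h v < g v.
  apply/existsP; apply: contraR hg_neq; rewrite negb_exists => /forallP hg'.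
  apply/eqP/ffunP => v; apply/eqP; rewrite eqn_leq hg /=.
  by rewrite leqNgt hg'.
rewrite /deg (bigD1 v) //= [X in _ < X](bigD1 v) //= -addSn.
by rewrite leq_add //; apply: leq_sum => u _; apply: hg.
Qed.

Lemma mingens_dvdm gs g : g \in gs -> exists2 h, h \in mingens gs & dvdm h g.
Proof.
have [k] := ubnP (deg g); elim: k g => // k IH g deg_g g_in.
case: (boolP (has (fun h => dvdm h g && (h != g)) gs)).
- move=> /hasP [h h_in /andP [hg hg_neq]].
  have [h' h'_min h'h] := IH h (leq_trans (deg_dvdm_lt hg hg_neq) deg_g) h_in.
  by exists h' => //; apply: dvdm_trans h'h hg.
- by move=> g_min; exists g; [rewrite mem_filter g_in g_min | apply: dvdm_refl].
Qed.

Lemma lcmm_ge gs g v : g \in gs -> g v <= lcmm gs v.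
Proof. by move=> g_in; rewrite ffunE (leq_bigmax_seq (F := fun g => g v)). Qed.

Definition max_exponent gs := \max_(g <- gs) \max_v g v.

Lemma max_exponent_ge gs g v : g \in gs -> g v <= max_exponent gs.
Proof.
move=> g_in; apply: leq_trans (leq_bigmax v) _.
exact: (leq_bigmax_seq (F := fun g => \max_v g v)).
Qed.

Definition irr_components gs : seq (mono V) :=
  [seq b <- [seq ([ffun v => f v : nat] : mono V)
               | f : {ffun V -> 'I_(max_exponent gs).+1}]
   | all (mirr b) gs].

Lemma gen_irr_components gs : same_ideal (gen gs) (irr_inter (irr_components gs)).
Proof.
move=> m; split.
  move=> /hasP [g g_in gm]; apply/allP => b; rewrite mem_filter => /andP [/allP bgs _].
  exact: mirr_dvdm gm (bgs g g_in).
apply: contraTT => m_notin.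
pose b : mono V := [ffun v => if m v < max_exponent gs then (m v).+1 else 0].
have b_in : b \in irr_components gs.
  rewrite mem_filter; apply/andP; split.
    apply/allP => g g_in.
    have : ~~ dvdm g m by apply: contra m_notin => gm; apply/hasP; exists g.
    rewrite negb_forall => /existsP [v]; rewrite -ltnNge => mg.
    apply/existsP; exists v; have := max_exponent_ge v g_in; rewrite ffunE.
    by case: ifP => /=; lia.
  apply/imageP; exists [ffun v => inord (b v)] => //.
  by apply/ffunP => v; rewrite !ffunE inordK //; case: ifP => //; lia.
apply/allPn; exists b => //; apply/negP => /existsP [v]; rewrite ffunE.
by case: ifP => _ /=; lia.
Qed.

Lemma is_Irr_exists (I : mideal V) S :
  same_ideal I (irr_inter S) -> exists S', is_Irr I S'.
Proof.
have [k] := ubnP (size S); elim: k S => // k IH S size_S IS.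
case: (classic (exists2 b, b \in S & same_ideal I (irr_inter (rem b S)))).
- move=> [b b_in Irem]; apply: IH Irem.
  have S_pos : 0 < size S by case: S b_in {size_S IS}.
  by rewrite size_rem // -ltnS prednK.
- by move=> irredundant; exists S; split => // b b_in Irem; apply: irredundant; exists b.
Qed.

Lemma gen_Irr gs : same_ideal (gen gs) (irr_inter (Irr (gen gs))).
Proof.
have [] // : is_Irr (gen gs) (Irr (gen gs)).
exact: epsilon_spec (is_Irr_exists (gen_irr_components gs)).
Qed.

Lemma gen_dual gs m : gen (dual gs) m <-> ~ gen gs [ffun v => aI gs v - m v].
Proof.
rewrite (gen_Irr gs [ffun v => aI gs v - m v]) /gen /dual has_map.
(* x^(b^a) divides m exactly when m^b does not contain x^(a - m). *)
split.
- move=> /hasP [b b_in /forallP dvd] /allP /(_ b b_in) /existsP [v].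
  by have := dvd v; rewrite !ffunE; case: ifP => //; lia.
- move=> /negP /allPn [b b_in b_notin]; apply/hasP; exists b => //.
  apply/forallP => v; rewrite ffunE; case: ifP => // b_pos.
  apply: contraR b_notin; rewrite -ltnNge => lt.
  by apply/existsP; exists v; rewrite ffunE b_pos /=; lia.
Qed.

End MonomialIdeals.

Section Polarization.
Variables n N : nat.
Implicit Types (g h : mono 'I_n) (D : seq (mono 'I_n)) (m : mono ('I_n * 'I_N)%type).

(* [hits m v t]: m is divisible by one of x_{v,1}, ..., x_{v,t} (the index
   k : 'I_N stands for x_{v,k+1}); so [pol_meets m g] says that m and the
   polarization of g have a common variable. *)
Definition hits m (v : 'I_n) (t : nat) : bool :=
  [exists k : 'I_N, (k < t) && (0 < m (v, k))].

Definition pol_meets m g : bool := [exists v, hits m v (g v)].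

Lemma hits_le m v t t' : t <= t' -> hits m v t -> hits m v t'.
Proof.
move=> le /existsP [k /andP [kt mk]]; apply/existsP; exists k.
by rewrite mk (leq_trans kt le).
Qed.

Lemma pol_meets_dvdm m g h : dvdm g h -> pol_meets m g -> pol_meets m h.
Proof.
move=> /forallP gh /existsP [v hit]; apply/existsP; exists v.
exact: hits_le (gh v) hit.
Qed.

Lemma aI_pol_le1 D p : aI (pol N D) p <= 1.
Proof.
rewrite ffunE; apply/bigmax_leqP_seq => _ /mingens_subset /mapP [g _ ->] _.
by rewrite ffunE; case: (_ < _).
Qed.

Lemma gen_pol_compl D m :
  gen (pol N D) [ffun p => aI (pol N D) p - m p] <->
  exists2 g, g \in mingens D & ~~ pol_meets m g.
Proof.
have a_le1 := aI_pol_le1 D; split.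
- move=> /hasP [_ /mapP [g g_min ->] /forallP dvd]; exists g => //.
  apply/existsP => [[v /existsP [k /andP [kg mk]]]].
  have := dvd (v, k); rewrite [polm _ _ _]ffunE [X in _ <= X]ffunE /= kg subn_gt0.
  by move=> /(leq_ltn_trans mk) /leq_trans /(_ (a_le1 (v, k))).
- move=> [g g_min g_misses].
  have [h h_min /forallP hg] : exists2 h, h \in mingens (pol N D) & dvdm h (polm N g).
    by apply: mingens_dvdm; apply/mapP; exists g.
  apply/hasP; exists h; first exact: mingens_subset h_min.
  apply/forallP => p; have h_le_a := lcmm_ge p h_min; rewrite ffunE.
  case: (posnP (h p)) => [-> // | hp].
  have := hg p; rewrite ffunE; case: ltnP => [pg _ | _]; last by lia.
  suff : m p = 0 by rewrite /aI; lia.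
  apply/eqP; rewrite -leqn0 leqNgt; apply: contra g_misses => mp.
  by apply/existsP; exists p.1; apply/existsP; exists p.2; rewrite pg -surjective_pairing.
Qed.

Lemma gen_dual_pol D m :
  gen (dual (pol N D)) m <-> forall g, gen D g -> pol_meets m g.
Proof.
split.
- move=> /gen_dual no_compl g /hasP [g0 g0_in g0g].
  have [h h_min hg0] := mingens_dvdm g0_in.
  apply: pol_meets_dvdm (dvdm_trans hg0 g0g) _; apply: contraT => h_misses.
  by exfalso; apply: no_compl; apply/gen_pol_compl; exists h.
- move=> meets; apply/gen_dual => /gen_pol_compl [g g_min]; rewrite meets //.
  by apply/hasP; exists g; [apply: mingens_subset | apply: dvdm_refl].
Qed.

End Polarization.

Section WeightedOrientedGraph.
Variables (n N : nat) (arc : rel 'I_n) (w : 'I_n -> nat).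
Hypothesis arc_irrefl : forall i, ~~ arc i i.
Hypothesis arc_asym : forall i j, arc i j -> ~~ arc j i.
Hypothesis w_gt0 : forall i, 0 < w i.
Hypothesis w_source : forall i, is_source arc i -> w i = 1.
Hypothesis w_leN : forall i, w i <= N.

Lemma mem_arcs i j : ((i, j) \in arcs arc) = arc i j.
Proof. by rewrite mem_enum. Qed.

Lemma mem_IDG g : g \in IDG arc w <-> exists i j, arc i j /\ g = edge_mono w i j.
Proof.
split; first by move=> /mapP [[i j]]; rewrite mem_arcs => ij ->; exists i, j.
by move=> [i [j [ij ->]]]; apply/mapP; exists (i, j); rewrite ?mem_arcs.
Qed.

Lemma arc_neq i j : arc i j -> j != i.
Proof. by apply: contraTneq => ->. Qed.

Lemma edge_mono_tail i j : arc i j -> edge_mono w i j i = 1.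
Proof. by move=> ij; rewrite ffunE eqxx eq_sym (negbTE (arc_neq ij)) mul0n. Qed.

Lemma edge_mono_head i j : arc i j -> edge_mono w i j j = w j.
Proof. by move=> ij; rewrite ffunE eqxx (negbTE (arc_neq ij)) mul1n. Qed.

Lemma edge_mono_other i j v : v != i -> v != j -> edge_mono w i j v = 0.
Proof. by move=> /negbTE vi /negbTE vj; rewrite ffunE vi vj. Qed.

Lemma edge_mono_le i j v : arc i j -> edge_mono w i j v <= w v.
Proof.
move=> ij; have [-> | vi] := eqVneq v i; first by rewrite edge_mono_tail.
have [-> | vj] := eqVneq v j; first by rewrite edge_mono_head.
by rewrite edge_mono_other.
Qed.

Lemma dvdm_edge_mono i j x :
  arc i j -> dvdm (edge_mono w i j) x = (0 < x i) && (w j <= x j).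
Proof.
move=> ij; apply/forallP/andP => [dvd | [xi xj] v].
  have := dvd i; have := dvd j.
  by rewrite edge_mono_tail // edge_mono_head // => -> ->.
have [-> | vi] := eqVneq v i; first by rewrite edge_mono_tail.
have [-> | vj] := eqVneq v j; first by rewrite edge_mono_head.
by rewrite edge_mono_other.
Qed.

Lemma gen_IDG x : gen (IDG arc w) x <-> exists i j, [/\ arc i j, 0 < x i & w j <= x j].
Proof.
split.
  move=> /hasP [_ /mem_IDG [i [j [ij ->]]]].
  by rewrite dvdm_edge_mono // => /andP [xi xj]; exists i, j.
move=> [i [j [ij xi xj]]]; apply/hasP; exists (edge_mono w i j).
  by apply/mem_IDG; exists i, j.
by rewrite dvdm_edge_mono // xi xj.
Qed.

Lemma edge_mono_mingens i j : arc i j -> edge_mono w i j \in mingens (IDG arc w).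
Proof.
move=> ij; rewrite mem_filter; apply/andP; split; last by apply/mem_IDG; exists i, j.
apply/hasPn => _ /mem_IDG [k [l [kl ->]]]; apply/negP => /andP [dvd neq].
move: dvd; rewrite dvdm_edge_mono // => /andP [k_pos l_ge].
have k_ij : (k == i) || (k == j).
  by apply: contraLR k_pos; rewrite negb_or => /andP [ki kj]; rewrite edge_mono_other.
have l_ij : (l == i) || (l == j).
  apply: contraLR l_ge; rewrite negb_or -ltnNge => /andP [li lj].
  by rewrite edge_mono_other.
have := arc_neq kl; have := arc_asym ij.
by move: k_ij l_ij neq kl => /orP [] /eqP -> /orP [] /eqP -> //; rewrite ?eqxx // => _ ->.
Qed.

Lemma aI_IDG_le v : aI (IDG arc w) v <= w v.
Proof.
rewrite ffunE; apply/bigmax_leqP_seq => _ /mingens_subset /mem_IDG [i [j [ij ->]]] _.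
exact: edge_mono_le.
Qed.

Lemma aI_IDG_head i j : arc i j -> aI (IDG arc w) j = w j.
Proof.
move=> ij; apply/eqP; rewrite eqn_leq aI_IDG_le -{1}(edge_mono_head ij).
exact/lcmm_ge/edge_mono_mingens.
Qed.

Lemma aI_IDG_tail i j : arc i j -> aI (IDG arc w) i = w i.
Proof.
move=> ij; have [/existsP [h hi] | no_in] := boolP [exists h, arc h i].
  exact: aI_IDG_head hi.
have w_i : w i = 1.
  apply: w_source; split; first by exists j.
  by move=> h; apply: contra no_in => hi; apply/existsP; exists h.
apply/eqP; rewrite eqn_leq aI_IDG_le w_i -{1}(edge_mono_tail ij).
exact/lcmm_ge/edge_mono_mingens.
Qed.

Definition covers (u : mono 'I_n) : bool :=
  [forall i, forall j, arc i j ==> (w i <= u i) || (0 < u j)].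

Lemma gen_dual_IDG u : gen (dual (IDG arc w)) u <-> covers u.
Proof.
split.
- move=> /gen_dual no_compl; apply/forallP => i; apply/forallP => j; apply/implyP => ij.
  rewrite leqNgt lt0n -negb_and; apply/negP => /andP [ui /eqP uj]; apply: no_compl.
  apply/gen_IDG; exists i, j.
  rewrite [X in 0 < X]ffunE [X in w j <= X]ffunE (aI_IDG_tail ij) (aI_IDG_head ij).
  by rewrite uj subn0 subn_gt0.
- move=> /forallP cov; apply/gen_dual => /gen_IDG [i [j [ij]]].
  rewrite [X in 0 < X]ffunE [X in w j <= X]ffunE (aI_IDG_tail ij) (aI_IDG_head ij).
  by have := implyP (forallP (cov i) j) ij; have := w_gt0 j; lia.
Qed.

Lemma gen_IGD m :
  gen (IGD N arc w) m <-> [exists i, exists j, [&& arc i j, hits m i (w i) & hits m j 1]].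
Proof.
split.
- move=> /hasP [g /flattenP [s /mapP [[i j]]]]; rewrite mem_arcs /= => ij -> {s}.
  move=> /mapP [l]; rewrite mem_iota => /andP [l_gt0 l_le] -> {g} /forallP dvd.
  have l_ltN : l.-1 < N by have := w_leN i; lia.
  have N_gt0 : 0 < N := leq_trans (w_gt0 i) (w_leN i).
  apply/existsP; exists i; apply/existsP; exists j; rewrite ij /=.
  apply/andP; split; apply/existsP.
    exists (Ordinal l_ltN).
    by have := dvd (i, Ordinal l_ltN); rewrite ffunE /= !eqxx /=; lia.
  exists (Ordinal N_gt0).
  by have := dvd (j, Ordinal N_gt0); rewrite ffunE /= !eqxx orbT.
- move=> /existsP [i /existsP [j /and3P [ij /existsP [k /andP [kw mk]] hj]]].
  move: hj => /existsP [z /andP [z0 mz]].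
  apply/hasP; exists (gd_edge N i j k.+1).
    apply/flattenP; exists [seq gd_edge N i j l | l <- iota 1 (w i)].
      by apply/mapP; exists (i, j); rewrite ?mem_arcs.
    by apply/mapP; exists k.+1; rewrite // mem_iota; lia.
  apply/forallP => [[v l]]; rewrite ffunE /=.
  case: (boolP ((v == i) && (l == k :> nat))) => [/andP [/eqP -> /eqP lk] | _] /=.
    by rewrite (_ : l = k) //; apply: val_inj.
  case: (boolP ((v == j) && (l == 0 :> nat))) => [/andP [/eqP -> /eqP l0] | _] //=.
  by rewrite (_ : l = z) //; apply: val_inj; rewrite /= l0; case: (val z) z0.
Qed.

Lemma pol_meets_covers (m : mono ('I_n * 'I_N)%type) :
  (forall u, covers u -> pol_meets m u) <->
  [exists i, exists j, [&& arc i j, hits m i (w i) & hits m j 1]].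
Proof.
split; last first.
  move=> /existsP [i /existsP [j /and3P [ij hi hj]]] u /forallP cov.
  have /orP [wi | uj] := implyP (forallP (cov i) j) ij; apply/existsP.
    by exists i; apply: hits_le wi hi.
  by exists j; apply: hits_le uj hj.
move=> meets; apply: contraT => /existsPn no_edge.
pose u : mono 'I_n :=
  [ffun v => if ~~ hits m v (w v) then w v else if ~~ hits m v 1 then 1 else 0].
have misses v : ~~ hits m v (u v).
  rewrite ffunE; case: ifP => // _; case: ifP => // _.
  by apply/existsPn => k; rewrite ltn0.
suff /existsP [v] : pol_meets m u by rewrite (negbTE (misses v)).
apply/meets/forallP => i; apply/forallP => j; apply/implyP => ij.
rewrite /u !ffunE; case: ifP => [_ | /negbFE hi]; first by rewrite leqnn.
have hj : ~~ hits m j 1.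
  by apply: contraNN (no_edge i) => hj; apply/existsP; exists j; apply/and3P.
apply/orP; right; case: ifP => // _; case: ifP => // /negbFE hj'.
by case/negP: hj.
Qed.

End WeightedOrientedGraph.

Theorem lemma5p5 (n N : nat) (arc : rel 'I_n) (w : 'I_n -> nat)
  (Hloop : forall i, ~~ arc i i)
  (Horient : forall i j, arc i j -> ~~ arc j i)
  (Hwpos : forall i, 0 < w i)
  (Hsource : forall i, is_source arc i -> w i = 1)
  (HN : forall i, w i <= N) :
  same_ideal (gen (dual (pol N (dual (IDG arc w))))) (gen (IGD N arc w)).
Proof.
have dual_IDG := gen_dual_IDG Hloop Horient Hwpos Hsource.
have IGD_edges := gen_IGD arc Hwpos HN.
have covers_meet := pol_meets_covers arc Hwpos.
move=> m; split.
- move=> /gen_dual_pol meets; apply/IGD_edges/covers_meet => u /dual_IDG.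
  exact: meets.
- move=> /IGD_edges /covers_meet meets; apply/gen_dual_pol => u /dual_IDG.
  exact: meets.
Qed.
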